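(* Let $\ell\ge 2$ and let $u,v$ be vertices of $CK(2,\ell)$. The imprints $im(u)$ and $im(v)$ contain the same number of $+$ signs and the same number of $-$ signs if and only if $v$ can be obtained from $u$ by a finite sequence of the following operations: (i) rotation, replacing $a_1a_2\ldots a_\ell$ by $a_2\ldots a_\ell a_1$; (ii) valid swap, replacing a single symbol $a_i$ by a symbol of $\{0,1,2\}$ different from both cyclic neighbours $a_{i-1}$ and $a_{i+1}$ (indices modulo $\ell$).
   Context: $CK(2,\ell)$ has as vertices all sequences $a_1\ldots a_\ell\in\{0,1,2\}^\ell$ with $a_i\neq a_{i+1}$ for $1\le i\le\ell-1$ and $a_1\ne a_\ell$, and an arc from $a_1\ldots a_\ell$ to $b_1\ldots b_\ell$ iff both are vertices and $b_i=a_{i+1}$ for $1\le i\le \ell-1$. For distinct $a,b\in\{0,1,2\}$ define $sgn(0,1)=sgn(1,2)=sgn(2,0)=+$ and $sgn(1,0)=sgn(2,1)=sgn(0,2)=-$. The imprint of a vertex $v=v_1\ldots v_\ell$ is the sequence $im(v)=(sgn(v_1,v_2),sgn(v_2,v_3),\dots,sgn(v_{\ell-1},v_\ell),sgn(v_\ell,v_1))$ of length $\ell$. *)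

From Stdlib Require Import Relations.
From mathcomp Require Import all_boot.
Set Implicit Arguments. Unset Strict Implicit. Unset Printing Implicit Defensive.

(* Symbols {0,1,2} are 'I_3; a word a_1..a_l is a seq 'I_3 (0-indexed). *)
Definition nxt (l i : nat) : nat := i.+1 %% l.
Definition prv (l i : nat) : nat := (i + l).-1 %% l.

(* Vertices of CK(2,l): words of length l with cyclically adjacent symbols distinct
   (for l >= 2 this is exactly a_i <> a_{i+1}, 1<=i<=l-1, and a_1 <> a_l). *)
Definition is_vertex (l : nat) (s : seq 'I_3) : bool :=
  (size s == l) &&
  [forall i : 'I_l, nth ord0 s i != nth ord0 s (nxt l i)].

(* sgn(a,b) = + (true) iff b = a+1 mod 3, i.e. (0,1),(1,2),(2,0). *)
Definition sgn (a b : 'I_3) : bool := (val b == (val a).+1 %% 3).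

Definition imprint (s : seq 'I_3) : seq bool :=
  [seq sgn (nth ord0 s i) (nth ord0 s (nxt (size s) i)) | i <- iota 0 (size s)].

Definition nplus (s : seq 'I_3) : nat := count (fun b : bool => b) (imprint s).
Definition nminus (s : seq 'I_3) : nat := count (fun b : bool => ~~ b) (imprint s).

Inductive op_step (l : nat) (u : seq 'I_3) : seq 'I_3 -> Prop :=
  | op_rot : op_step l u (rot 1 u)
  | op_swap (i : nat) (c : 'I_3) :
      i < l ->
      c != nth ord0 u (prv l i) ->
      c != nth ord0 u (nxt l i) ->
      op_step l u (set_nth ord0 u i c).

Definition reachable (l : nat) : relation (seq 'I_3) :=
  clos_refl_trans (seq 'I_3) (op_step l).

From Stdlib Require Import Relations.
From mathcomp Require Import all_boot zify.

(* A rotation rotates the imprint, and a valid swap of the middle letter of a factor [a b e]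
   by [c] replaces [sgn a b + sgn b e] by [sgn a c + sgn c e], and over three symbols this sum
   depends only on [a] and [e]; so both operations preserve the number of [+], and both can be
   undone on vertices.
   Conversely, if the imprint reads [- +] around the middle letter of [a b e], swapping that
   letter for [a + 1] turns it into [+ -]. Bubble sort therefore brings every vertex, keeping its
   first letter, to one whose imprint is [+^p -^(l-p)]; such a vertex is determined by its first
   letter, and rotating and re-sorting twice makes that letter run through all three symbols. *)

Set Implicit Arguments.
Unset Strict Implicit.
Unset Printing Implicit Defensive.

#[local] Arguments rt_refl {A R x}.
#[local] Arguments rt_step {A R x y}.
#[local] Arguments rt_trans {A R x y z}.

Lemma sgn_detour (a b c e : 'I_3) : a != b -> b != e -> a != c -> c != e ->
  sgn a b + sgn b e = sgn a c + sgn c e.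
Proof.
by case: a => [[|[|[|?]]] ?]; case: b => [[|[|[|?]]] ?]; case: c => [[|[|[|?]]] ?];
   case: e => [[|[|[|?]]] ?].
Qed.

Lemma sgn_inj (a b b' : 'I_3) : a != b -> a != b' -> sgn a b = sgn a b' -> b = b'.
Proof.
case: a => [[|[|[|?]]] ?]; case: b => [[|[|[|?]]] ?]; case: b' => [[|[|[|?]]] ?] //= _ _ _;
 exact: val_inj.
Qed.

Lemma sgn_flip (a b e : 'I_3) : a != b -> b != e -> ~~ sgn a b -> sgn b e ->
  [&& ordS a != a, ordS a != e, sgn a (ordS a) & ~~ sgn (ordS a) e].
Proof.
by case: a => [[|[|[|?]]] ?]; case: b => [[|[|[|?]]] ?]; case: e => [[|[|[|?]]] ?].
Qed.

Lemma sgn_chain_cover (a b c x : 'I_3) : a != b -> b != c -> sgn b c = sgn a b ->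
  x \in [:: a; b; c].
Proof.
by case: a => [[|[|[|?]]] ?]; case: b => [[|[|[|?]]] ?]; case: c => [[|[|[|?]]] ?];
   case: x => [[|[|[|?]]] ?].
Qed.

Lemma ltn_nxt l i : 0 < l -> nxt l i < l.
Proof. exact: ltn_pmod. Qed.

Lemma ltn_prv l i : 0 < l -> prv l i < l.
Proof. exact: ltn_pmod. Qed.

Lemma nxt_prv l i : i < l -> nxt l (prv l i) = i.
Proof. by move=> lt_il; have /(congr1 val) := ord_predK (Ordinal lt_il). Qed.

Lemma nxt_eq_prv l i j : i < l -> j < l -> (nxt l j == i) = (j == prv l i).
Proof.
move=> lt_il lt_jl; apply/eqP/eqP => [<-|->]; last exact: nxt_prv.
by have /(congr1 val) := ordSK (Ordinal lt_jl).
Qed.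

Section CyclicIndex.

Variable l : nat.
Hypothesis l_gt1 : 1 < l.

Lemma nxt_neq i : i < l -> nxt l i != i.
Proof.
rewrite /nxt => lt_il; case: (ltnP i.+1 l) => [lt_Sil|le_lSi].
  by rewrite modn_small // neq_ltn ltnSn orbT.
have -> : i.+1 = l by lia.
by rewrite modnn; lia.
Qed.

Lemma prv_neq i : i < l -> prv l i != i.
Proof.
move=> lt_il; apply/eqP => prv_i.
by have /eqP := nxt_neq lt_il; rewrite -{1}prv_i nxt_prv.
Qed.

End CyclicIndex.

Lemma size_imprint s : size (imprint s) = size s.
Proof. by rewrite size_map size_iota. Qed.

Lemma nth_imprint s j : j < size s ->
  nth false (imprint s) j = sgn (nth ord0 s j) (nth ord0 s (nxt (size s) j)).
Proof. by move=> lt_js; rewrite (nth_map 0) ?size_iota // nth_iota. Qed.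

Lemma nminusE s : nminus s = size s - nplus s.
Proof. by rewrite -(size_imprint s) -(count_predC id (imprint s)) addKn. Qed.

Lemma nth_rot1 T (x0 : T) s j : j < size s ->
  nth x0 (rot 1 s) j = nth x0 s (nxt (size s) j).
Proof.
case: s => [|x s] //= lt_js; rewrite rot1_cons nth_rcons /nxt.
case: (ltnP j (size s)) => [lt_j|le_j]; first by rewrite modn_small.
have -> : j = size s by lia.
by rewrite eqxx modnn.
Qed.

Lemma imprint_rot1 s : imprint (rot 1 s) = rot 1 (imprint s).
Proof.
apply: (@eq_from_nth _ false) => [|j]; first by rewrite size_rot !size_imprint size_rot.
rewrite size_imprint size_rot => lt_js; have s_gt0 : 0 < size s by lia.
rewrite nth_imprint ?size_rot // !nth_rot1 ?size_imprint ?ltn_nxt //.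
by rewrite nth_imprint ?ltn_nxt.
Qed.

Lemma nplus_rot1 s : nplus (rot 1 s) = nplus s.
Proof. by rewrite /nplus imprint_rot1; apply/permP; rewrite perm_rot. Qed.

Lemma vertexP l s : reflect (size s = l /\ forall i, i < l -> nth ord0 s i != nth ord0 s (nxt l i))
  (is_vertex l s).
Proof.
apply: (iffP andP) => [[/eqP size_s /forallP adj]|[size_s adj]]; split => //.
- by move=> i lt_il; exact: (adj (Ordinal lt_il)).
- by rewrite size_s.
- by apply/forallP => i; exact: adj.
Qed.

Lemma rot1_vertex l s : is_vertex l s -> is_vertex l (rot 1 s).
Proof.
case/vertexP => size_s adj; apply/vertexP; split; first by rewrite size_rot.
move=> i lt_il; have lt_nxt : nxt l i < l by rewrite ltn_nxt //; lia.
by rewrite !nth_rot1 ?size_s //; exact: adj.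
Qed.

Lemma count_set_nthD T (a : pred T) x0 s n x : n < size s ->
  count a (set_nth x0 s n x) + a (nth x0 s n) = count a s + a x.
Proof.
elim: s n => [|y s IH] [|n] //= lt_ns; first lia.
by rewrite -addnA IH //; lia.
Qed.

Section ValidSwap.

Variables (l : nat) (s : seq 'I_3) (i : nat) (c : 'I_3).
Hypotheses (l_gt1 : 1 < l) (size_s : size s = l) (lt_il : i < l).

Local Notation w := (set_nth ord0 s i c).

Lemma size_swap : size w = l.
Proof. by rewrite size_set_nth size_s; apply/maxn_idPr. Qed.

Lemma nth_swap j : nth ord0 w j = if j == i then c else nth ord0 s j.
Proof. exact: nth_set_nth. Qed.

Lemma imprint_swap : imprint w = set_nth false
  (set_nth false (imprint s) (prv l i) (sgn (nth ord0 s (prv l i)) c))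
  i (sgn c (nth ord0 s (nxt l i))).
Proof.
have lt_prv : prv l i < l by rewrite ltn_prv // ltnW.
apply: (@eq_from_nth _ false) => [|j].
  by rewrite !size_set_nth size_imprint size_swap size_imprint size_s !(maxn_idPr _).
rewrite size_imprint size_swap => lt_jl.
rewrite nth_imprint size_swap // !nth_swap nth_set_nth /=.
have [-> | ne_ji] := eqVneq j i; first by rewrite (negbTE (nxt_neq l_gt1 lt_il)).
rewrite nth_set_nth /= nth_imprint size_s //.
have [-> | ne_jp] := eqVneq j (prv l i).
  by rewrite nxt_prv // eqxx.
by rewrite nxt_eq_prv // (negbTE ne_jp).
Qed.

Hypotheses (c_prv : c != nth ord0 s (prv l i)) (c_nxt : c != nth ord0 s (nxt l i)).

Lemma swap_vertex : is_vertex l s -> is_vertex l w.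
Proof.
case/vertexP => _ adj; apply/vertexP; split=> [|j lt_jl]; first exact: size_swap.
rewrite !nth_swap nxt_eq_prv //.
have [-> | ne_ji] := eqVneq j i; first by rewrite (eq_sym i) (negbTE (prv_neq l_gt1 lt_il)).
by case: (eqVneq j (prv l i)) => [->|_]; [rewrite eq_sym | exact: adj].
Qed.

Lemma nplus_swap : is_vertex l s -> nplus w = nplus s.
Proof.
case/vertexP => _ adj; rewrite /nplus imprint_swap.
have lt_prv : prv l i < l by rewrite ltn_prv // ltnW.
set t := imprint s; have size_t : size t = l by rewrite size_imprint.
set t1 := set_nth false t _ _.
have cnt_prv : count id t1 + nth false t (prv l i) = count id t + sgn (nth ord0 s (prv l i)) c.
  by apply: count_set_nthD; rewrite size_t.
have cnt_i : count id (set_nth false t1 i (sgn c (nth ord0 s (nxt l i)))) + nth false t i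
    = count id t1 + sgn c (nth ord0 s (nxt l i)).
  have t1_i : nth false t1 i = nth false t i.
    by rewrite nth_set_nth /= (eq_sym i) (negbTE (prv_neq l_gt1 lt_il)).
  by rewrite -t1_i; apply: count_set_nthD; rewrite size_set_nth size_t (maxn_idPr lt_prv).
have := adj _ lt_prv; rewrite nxt_prv // => adj_prv.
have prv_c : nth ord0 s (prv l i) != c by rewrite eq_sym.
have := sgn_detour adj_prv (adj _ lt_il) prv_c c_nxt.
rewrite /t !nth_imprint size_s // nxt_prv // in cnt_prv cnt_i *; lia.
Qed.

End ValidSwap.

Lemma reachable_rot l s k : reachable l s (rot k s).
Proof.
elim: k => [|k IH]; first by rewrite rot0; apply: rt_refl.
case: (ltnP k (size s)) => [lt_ks | le_sk].
  by rewrite rotS //; exact: rt_trans IH (rt_step (op_rot _ _)).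
by rewrite rot_oversize ?(leq_trans le_sk) //; apply: rt_refl.
Qed.

Lemma op_step_sym l u w : 1 < l -> is_vertex l u -> op_step l u w -> reachable l w u.
Proof.
move=> l_gt1 /vertexP[size_u adj]; case=> [|i c lt_il c_prv c_nxt].
  by rewrite -{2}(rotK 1 u) /rotr size_rot; apply: reachable_rot.
have nth_u_swap k : k != i -> nth ord0 (set_nth ord0 u i c) k = nth ord0 u k.
  by rewrite nth_set_nth /= => /negbTE ->.
have {2}-> : u = set_nth ord0 (set_nth ord0 u i c) i (nth ord0 u i).
  apply: (@eq_from_nth _ ord0) => [|k _].
    by rewrite !size_set_nth maxnA maxnn size_u (maxn_idPr lt_il).
  by rewrite !nth_set_nth /=; case: (eqVneq k i) => [-> // | /nth_u_swap ->].
apply/rt_step/op_swap => //.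
  rewrite nth_u_swap ?prv_neq // eq_sym -{2}(nxt_prv lt_il); apply: adj.
  by rewrite ltn_prv // ltnW.
by rewrite nth_u_swap ?nxt_neq //; exact: adj.
Qed.

Lemma op_step_vertex l u w : 1 < l -> is_vertex l u -> op_step l u w ->
  is_vertex l w /\ nplus w = nplus u.
Proof.
move=> l_gt1 vu; case/vertexP: (vu) => size_u _.
case=> [|i c lt_il c_prv c_nxt]; first by split; [exact: rot1_vertex | exact: nplus_rot1].
split; [exact: (swap_vertex l_gt1) | exact: (nplus_swap l_gt1)].
Qed.

Lemma reachable_vertex l u v : 1 < l -> reachable l u v -> is_vertex l u ->
  [/\ is_vertex l v, nplus v = nplus u & reachable l v u].
Proof.
move=> l_gt1; elim=> {u v} [u v uv | u | u v w _ IHuv _ IHvw] vu.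
- by have [vv <-] := op_step_vertex l_gt1 vu uv; split=> //; exact: op_step_sym uv.
- by split=> //; apply: rt_refl.
- have [vv <- vu'] := IHuv vu; have [vw <- wv] := IHvw vv.
  by split=> //; exact: rt_trans wv vu'.
Qed.

Definition sorted_signs (l p : nat) : seq bool := nseq p true ++ nseq (l - p) false.

Fixpoint inversions (d : seq bool) : nat :=
  if d is b :: d' then (if b then 0 else count id d') + inversions d' else 0.

Lemma inversions_cat x y :
  inversions (x ++ y) = inversions x + inversions y + count negb x * count id y.
Proof.
elim: x => [|b x IH] /=; first by rewrite mul0n addn0.
by rewrite IH count_cat; case: b => /=; nia.
Qed.

Lemma inversions_swap x y :
  inversions (x ++ true :: false :: y) < inversions (x ++ false :: true :: y).
Proof. rewrite !inversions_cat /=; lia. Qed.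

Lemma inversions_eq0 d : inversions d = 0 -> d = sorted_signs (size d) (count id d).
Proof.
rewrite /sorted_signs; elim: d => [|b d IH] //=; case: b => /= inv_d.
  by rewrite subSS -IH.
have [cnt0 inv_d0] : count id d = 0 /\ inversions d = 0 by lia.
by rewrite cnt0 subn0 {1}(IH inv_d0) cnt0 subn0.
Qed.

Lemma inversions_gt0 d : 0 < inversions d -> exists x y, d = x ++ false :: true :: y.
Proof.
elim: d => [|b d IH] //= inv_gt0.
have [inv_d0 | /IH [x [y ->]]] := posnP (inversions d); last by exists (b :: x), y.
move: inv_gt0; rewrite inv_d0 addn0; case: b => // cnt_gt0.
rewrite (inversions_eq0 inv_d0) /sorted_signs; move: cnt_gt0.
case: (count id d) => // n _.
by exists [::], (nseq n true ++ nseq (size d - n.+1) false).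
Qed.

Lemma count_sorted_signs l p : count id (sorted_signs l p) = p.
Proof. by rewrite count_cat !count_nseq /= mul1n mul0n addn0. Qed.

Lemma set_nth_cat T (x0 : T) x y n z :
  set_nth x0 (x ++ y) (size x + n) z = x ++ set_nth x0 y n z.
Proof. by elim: x => //= a x ->. Qed.

Lemma sort_step l w x y : 1 < l -> is_vertex l w -> imprint w = x ++ false :: true :: y ->
  exists2 w', op_step l w w' &
    imprint w' = x ++ true :: false :: y /\ nth ord0 w' 0 = nth ord0 w 0.
Proof.
move=> l_gt1 vw imp_w; case/vertexP: (vw) => size_w adj.
have size_xy : size x + 2 + size y = l.
  by rewrite -size_w -size_imprint imp_w size_cat /=; lia.
have lt_xl : size x < l by lia.
have lt_il : (size x).+1 < l by lia.
have nxt_x : nxt l (size x) = (size x).+1 by rewrite /nxt modn_small.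
have prv_i : prv l (size x).+1 = size x by rewrite /prv addSn /= modnDr modn_small.
have imp_at k : k < l -> nth false (imprint w) k = sgn (nth ord0 w k) (nth ord0 w (nxt l k)).
  by rewrite -size_w; exact: nth_imprint.
have sgn_ab : ~~ sgn (nth ord0 w (size x)) (nth ord0 w (size x).+1).
  by rewrite -nxt_x -imp_at // imp_w nth_cat ltnn subnn.
have sgn_be : sgn (nth ord0 w (size x).+1) (nth ord0 w (nxt l (size x).+1)).
  by rewrite -imp_at // imp_w nth_cat ltnNge leqnSn /= subSn // subnn.
have := adj _ lt_xl; rewrite nxt_x => adj_ab.
have /and4P[c_a c_e sgn_ac sgn_ce] := sgn_flip adj_ab (adj _ lt_il) sgn_ab sgn_be.
exists (set_nth ord0 w (size x).+1 (ordS (nth ord0 w (size x)))).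
  by apply: op_swap; rewrite ?prv_i.
split; last by rewrite nth_set_nth.
rewrite (@imprint_swap l w _ _ l_gt1 size_w lt_il) prv_i imp_w (negbTE sgn_ce) sgn_ac.
by rewrite -[size x]addn0 set_nth_cat -addn1 -addnA set_nth_cat.
Qed.

Lemma reachable_sorted l w : 1 < l -> is_vertex l w ->
  exists2 w', reachable l w w' &
    [/\ is_vertex l w', imprint w' = sorted_signs l (nplus w) & nth ord0 w' 0 = nth ord0 w 0].
Proof.
move=> l_gt1; have [n] := ubnP (inversions (imprint w)).
elim: n w => // n IH w lt_inv vw.
have [inv0 | /inversions_gt0[x [y imp_w]]] := posnP (inversions (imprint w)).
  exists w; first exact: rt_refl.
  by split=> //; rewrite [LHS]inversions_eq0 // size_imprint; case/vertexP: vw => ->.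
have [w1 ww1 [imp_w1 head_w1]] := sort_step l_gt1 vw imp_w.
have [vw1 nplus_w1 _] := reachable_vertex l_gt1 (rt_step ww1) vw.
have [|w' w1w' [vw' imp_w' head_w']] := IH w1 _ vw1.
  by rewrite imp_w1 -ltnS (leq_trans _ lt_inv) // ltnS imp_w inversions_swap.
exists w'; first exact: rt_trans (rt_step ww1) w1w'.
by rewrite imp_w' nplus_w1 head_w' head_w1.
Qed.

Lemma nplus_sorted l p t : imprint t = sorted_signs l p -> nplus t = p.
Proof. by rewrite /nplus => ->; exact: count_sorted_signs. Qed.

Lemma reachable_sorted_shift l p t : 1 < l -> is_vertex l t -> imprint t = sorted_signs l p ->
  exists2 t', reachable l t t' &
    [/\ is_vertex l t', imprint t' = imprint t & nth ord0 t' 0 = nth ord0 t 1].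
Proof.
move=> l_gt1 vt imp_t; have /vertexP[size_t _] := vt.
have [t' tt' [vt' imp_t' head_t']] := reachable_sorted l_gt1 (rot1_vertex vt).
exists t'; first exact: rt_trans (rt_step (op_rot _ _)) tt'.
split=> //; first by rewrite imp_t' nplus_rot1 (nplus_sorted imp_t).
by rewrite head_t' nth_rot1 size_t ?(ltnW l_gt1) // /nxt modn_small.
Qed.

Lemma sorted_head l p t : 1 < l -> is_vertex l t -> imprint t = sorted_signs l p ->
  nth ord0 t 0 != nth ord0 t 1 /\ sgn (nth ord0 t 0) (nth ord0 t 1) = (0 < p).
Proof.
move=> l_gt1 /vertexP[size_t adj] imp_t; have l_gt0 := ltnW l_gt1.
have nxt0 : nxt l 0 = 1 by rewrite /nxt modn_small.
split; first by have := adj 0 l_gt0; rewrite nxt0.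
have := nth_imprint (_ : 0 < size t); rewrite size_t nxt0 => /(_ l_gt0) <-.
by rewrite imp_t /sorted_signs; case: p {imp_t} => [|p] //=; rewrite subn0 nth_nseq l_gt0.
Qed.

Lemma reachable_sorted_head l p t x : 1 < l -> is_vertex l t -> imprint t = sorted_signs l p ->
  exists2 t', reachable l t t' & [/\ is_vertex l t', imprint t' = imprint t & nth ord0 t' 0 = x].
Proof.
move=> l_gt1 vt imp_t.
have [t1 tt1 [vt1 imp_t1 head_t1]] := reachable_sorted_shift l_gt1 vt imp_t.
rewrite imp_t in imp_t1.
have [t2 t1t2 [vt2 imp_t2 head_t2]] := reachable_sorted_shift l_gt1 vt1 imp_t1.
have [adj0 sgn0] := sorted_head l_gt1 vt imp_t.
have [adj1 sgn1] := sorted_head l_gt1 vt1 imp_t1.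
rewrite -head_t1 -head_t2 in adj0 sgn0 adj1 sgn1.
have := sgn_chain_cover x adj0 adj1; rewrite sgn0 sgn1 => /(_ erefl).
rewrite !inE => /or3P[] /eqP ->.
- by exists t; [exact: rt_refl | split].
- by exists t1 => //; split=> //; rewrite imp_t1 imp_t.
- exists t2; [exact: rt_trans tt1 t1t2 | split=> //].
  by rewrite imp_t2 imp_t1 imp_t.
Qed.

Lemma vertex_imprint_inj l v1 v2 : is_vertex l v1 -> is_vertex l v2 ->
  imprint v1 = imprint v2 -> nth ord0 v1 0 = nth ord0 v2 0 -> v1 = v2.
Proof.
move=> /vertexP[size1 adj1] /vertexP[size2 adj2] imp_eq head_eq.
apply: (@eq_from_nth _ ord0) => [|j]; first by rewrite size1 size2.
rewrite size1; elim: j => // j IH lt_Sjl; have lt_jl := ltnW lt_Sjl.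
have nxt_j : nxt l j = j.+1 by rewrite /nxt modn_small.
have := adj1 _ lt_jl; have := adj2 _ lt_jl; rewrite nxt_j (IH lt_jl) => adj2j adj1j.
apply: sgn_inj adj1j adj2j _.
have := congr1 (nth false ^~ j) imp_eq; rewrite /= !nth_imprint ?size1 ?size2 //.
by rewrite nxt_j IH.
Qed.

Theorem lemma4 (l : nat) (u v : seq 'I_3) :
  2 <= l -> is_vertex l u -> is_vertex l v ->
  ((nplus u = nplus v /\ nminus u = nminus v) <-> reachable l u v).
Proof.
move=> l_gt1 vu vv; split=> [[nplus_uv _] | uv]; last first.
  have [_ nplus_vu _] := reachable_vertex l_gt1 uv vu.
  case/vertexP: vu => size_u _; case/vertexP: vv => size_v _.
  by rewrite !nminusE size_u size_v nplus_vu.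
have [su usu [vsu imp_su _]] := reachable_sorted l_gt1 vu.
have [sv vsv [vsv' imp_sv _]] := reachable_sorted l_gt1 vv.
have [_ _ svv] := reachable_vertex l_gt1 vsv vv.
have [x sux [vx imp_x head_x]] := reachable_sorted_head (nth ord0 sv 0) l_gt1 vsu imp_su.
have x_sv : x = sv.
  by apply: vertex_imprint_inj vx vsv' _ head_x; rewrite imp_x imp_su imp_sv nplus_uv.
by rewrite -x_sv in svv; exact: rt_trans usu (rt_trans sux svv).
Qed.
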